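(* Consider a liquid ($l$), its vapor ($v$) and a gas ($g$), each with extensive entropy $S_k:(\mathbb R^+)^3\to\mathbb R\cup\{-\infty\}$ of $W_k=(M_k,V_k,E_k)$ satisfying: the set $C_k=\{S_k>-\infty\}$ is non-empty closed convex, $S_k$ is concave, positively homogeneous of degree 1, upper semi-continuous, and $\mathcal C^2$ on $C_k$ with $\partial S_k/\partial E>0$. Define for each phase the temperature $T_k$, pressure $p_k$ and chemical potential $\mu_k$ by $1/T_k=\partial S_k/\partial E$, $p_k/T_k=\partial S_k/\partial V$, $\mu_k=-T_k\,\partial S_k/\partial M$. Let $\Sigma=S_l(W_l)+S_g(W_g)+S_v(W_v)$. (a) Without phase transition: fix $(M,V,E)$ and $M_l,M_g,M_v\ge0$ with $M=M_l+M_g+M_v$, and suppose $\Sigma$ attains its maximum over the set $\{W_k\in C_k:\ E=E_l+E_g+E_v,\ V=V_l+V_v,\ V_g=V_v\}$ at a point lying in the interior of this constraint set (all three phases present). Then at this maximizer $T_l=T_g=T_v$ and $p_l=p_g+p_v$ (Dalton's law). (b) With phase transition: fix $(M,V,E)$ and $M_g$, and suppose $\Sigma$ attains its maximum over $\{W_k\in C_k:\ M-M_g=M_l+M_v,\ E=E_l+E_g+E_v,\ V=V_l+V_v,\ V_g=V_v\}$ at an interior point. Then at this maximizer $T_l=T_g=T_v$, $p_l=p_g+p_v$, and moreover $\mu_l=\mu_v$.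
   Context: The volume constraints $V=V_l+V_v$, $V_g=V_v$ encode that the vapor and gas are miscible (occupy the same volume) while the liquid is immiscible with them. The gas does not exchange mass with the other phases. *)

From HB Require Import structures.
From mathcomp Require Import all_boot all_order all_algebra.
From mathcomp Require Import all_classical all_reals all_analysis.
Set Implicit Arguments. Unset Strict Implicit. Unset Printing Implicit Defensive.
Import Order.TTheory GRing.Theory Num.Theory.
Import numFieldNormedType.Exports.
Local Open Scope classical_set_scope.
Local Open Scope ring_scope.

Section Thermo.
Context {R : realType}.

Definition iM : 'I_3 := inord 0.
Definition iV : 'I_3 := inord 1.
Definition iE : 'I_3 := inord 2.
Definition Mof (W : 'rV[R]_3) : R := W ord0 iM.
Definition Vof (W : 'rV[R]_3) : R := W ord0 iV.
Definition Eof (W : 'rV[R]_3) : R := W ord0 iE.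
Definition ev (i : 'I_3) : 'rV[R]_3 := delta_mx ord0 i.

Definition Rplus3 : set 'rV[R]_3 := [set W | forall i, 0 <= W ord0 i].

Definition dom_S (S : 'rV[R]_3 -> \bar R) : set 'rV[R]_3 :=
  [set W | Rplus3 W /\ (-oo < S W)%E].

(* finite part of S, used for derivatives on the interior of C_k *)
Definition Sfin (S : 'rV[R]_3 -> \bar R) : 'rV[R]_3 -> R := fun W => fine (S W).

Definition convex_set3 (C : set 'rV[R]_3) : Prop :=
  forall x y (t : R), C x -> C y -> 0 <= t <= 1 -> C (t *: x + (1 - t) *: y).

Definition concave_ext (S : 'rV[R]_3 -> \bar R) : Prop :=
  forall x y (t : R), Rplus3 x -> Rplus3 y -> 0 < t < 1 ->
    (t%:E * S x + (1 - t)%:E * S y <= S (t *: x + (1 - t) *: y)%R)%E.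

Definition pos_homogeneous1 (S : 'rV[R]_3 -> \bar R) : Prop :=
  forall (l : R) W, 0 < l -> Rplus3 W -> S (l *: W) = (l%:E * S W)%E.

Definition usc_on_Rplus3 (S : 'rV[R]_3 -> \bar R) : Prop :=
  forall x (a : R), Rplus3 x -> (S x < a%:E)%E ->
    \forall y \near x, Rplus3 y -> (S y < a%:E)%E.

Definition C2_on (U : set 'rV[R]_3) (f : 'rV[R]_3 -> R) : Prop :=
  forall (i j : 'I_3) x, U x ->
    [/\ derivable f x (ev i),
        derivable ('D_(ev i) f) x (ev j)
      & {for x, continuous ('D_(ev j) ('D_(ev i) f))}].

Definition entropy_fun (S : 'rV[R]_3 -> \bar R) : Prop :=
  [/\ [/\ (forall W, S W != +oo%E),
          dom_S S !=set0,
          closed (dom_S S)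
        & convex_set3 (dom_S S)],
      [/\ concave_ext S,
          pos_homogeneous1 S
        & usc_on_Rplus3 S],
      C2_on (interior (dom_S S)) (Sfin S)
    & (forall W, interior (dom_S S) W -> 0 < 'D_(ev iE) (Sfin S) W)].

Definition temperature (S : 'rV[R]_3 -> \bar R) W : R :=
  ('D_(ev iE) (Sfin S) W)^-1.
Definition pressure (S : 'rV[R]_3 -> \bar R) W : R :=
  temperature S W * 'D_(ev iV) (Sfin S) W.
Definition chem_pot (S : 'rV[R]_3 -> \bar R) W : R :=
  - (temperature S W * 'D_(ev iM) (Sfin S) W).

Definition Sigma (Sl Sg Sv : 'rV[R]_3 -> \bar R) (Wl Wg Wv : 'rV[R]_3) : \bar R :=
  (Sl Wl + Sg Wg + Sv Wv)%E.

Definition feasible_a (Sl Sg Sv : 'rV[R]_3 -> \bar R) (V E Ml Mg Mv : R)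
    (Wl Wg Wv : 'rV[R]_3) : Prop :=
  [/\ [/\ dom_S Sl Wl, dom_S Sg Wg & dom_S Sv Wv],
      [/\ Mof Wl = Ml, Mof Wg = Mg & Mof Wv = Mv],
      E = Eof Wl + Eof Wg + Eof Wv,
      V = Vof Wl + Vof Wv
    & Vof Wg = Vof Wv].

Definition feasible_b (Sl Sg Sv : 'rV[R]_3 -> \bar R) (M V E Mg : R)
    (Wl Wg Wv : 'rV[R]_3) : Prop :=
  [/\ [/\ dom_S Sl Wl, dom_S Sg Wg & dom_S Sv Wv],
      Mof Wg = Mg /\ M - Mg = Mof Wl + Mof Wv,
      E = Eof Wl + Eof Wg + Eof Wv,
      V = Vof Wl + Vof Wv
    & Vof Wg = Vof Wv].

Definition interior_point (Sl Sg Sv : 'rV[R]_3 -> \bar R) (Wl Wg Wv : 'rV[R]_3) : Prop :=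
  [/\ interior (dom_S Sl) Wl, interior (dom_S Sg) Wg & interior (dom_S Sv) Wv].

End Thermo.

From HB Require Import structures.
From mathcomp Require Import all_boot all_order all_algebra.
From mathcomp Require Import all_classical all_reals all_analysis.
From mathcomp Require Import lra.
Import Order.TTheory GRing.Theory Num.Theory.
Import numFieldNormedType.Exports.
Local Open Scope classical_set_scope.
Local Open Scope ring_scope.

(* At an interior maximiser, a perturbation (h dl, h dg, h dv) that preserves the
   linear constraints stays feasible for small h, so h |-> Sigma has a local maximum
   at 0 and, by Fermat's rule, the sum of the directional derivatives of the three
   entropies vanishes.  Exchanging energy between two phases gives equal dS/dE,
   i.e. equal temperatures; transferring volume from the liquid to the common
   gas-vapour volume gives dS_l/dV = dS_g/dV + dS_v/dV, which at a common
   temperature is Dalton's law; exchanging mass between liquid and vapour gives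
   equal dS/dM, hence equal chemical potentials.  A maximiser for (b) also
   maximises (a) at the masses it realises, so (b) inherits the conclusions of (a). *)

Section LineDerivative.
Context {R : realType} {V : normedModType R}.

Lemma is_derive_lineP {W : normedModType R} (f : V -> W) x v (D : W) :
  is_derive x v f D <-> is_derive (0 : R) 1 (fun h => f (h *: v + x)) D.
Proof.
have E : (fun h : R => h^-1 *: (((fun h => f (h *: v + x)) \o shift 0) (h *: 1)
            - f (0 *: v + x))) = (fun h => h^-1 *: ((f \o shift x) (h *: v) - f x)).
  by apply/funext => h /=; rewrite addr0 -[h *: 1]/(h * 1) mulr1 scale0r add0r.
by split=> -[dfx Dfx]; split; rewrite /derivable /derive ?E -?E in dfx Dfx *.
Qed.

Lemma is_derive_line {W : normedModType R} (f : V -> W) x v :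
  derivable f x v -> is_derive (0 : R) 1 (fun h => f (h *: v + x)) ('D_v f x).
Proof. by move=> /derivableP /is_derive_lineP. Qed.

(* Only partial derivatives are available, not a differential, so rescaling the
   direction goes through the one-variable chain rule along the line. *)
Lemma is_derive_dirZ {f : V -> R} {x v : V} (a : R) :
  derivable f x v -> is_derive x (a *: v) f (a * 'D_v f x).
Proof.
move=> /is_derive_line df; apply/is_derive_lineP.
have -> : (fun h => f (h *: (a *: v) + x)) = (fun h => f (h *: v + x)) \o (a \*: id).
  by apply/funext => h /=; rewrite scalerA mulrC.
have da : is_derive (0 : R) 1 (a \*: id) a.
  by have := is_deriveZ a (is_derive_id (0 : R) 1); rewrite [_ *: 1]mulr1.
rewrite mulrC; apply: is_derive1_comp.
by rewrite /= scaler0.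
Qed.

Lemma derive_eq0_at_local_max (f : V -> R) x v :
  derivable f x v -> (\forall h \near 0, f (h *: v + x) <= f x) -> 'D_v f x = 0.
Proof.
move=> df fmax; set q := fun h : R => h^-1 *: ((f \o shift x) (h *: v) - f x).
have dq : q @ 0^' --> 'D_v f x := df.
have dqr : q @ 0^'+ --> 'D_v f x.
  by apply: cvg_trans dq; apply: cvg_app; apply: within_subset => h /lt0r_neq0.
have dql : q @ 0^'- --> 'D_v f x.
  by apply: cvg_trans dq; apply: cvg_app; apply: within_subset => h /ltr0_neq0.
apply/eqP; rewrite eq_le (cvgr_to_le dqr) ?(cvgr_to_ge dql) //.
- near=> h; apply: mulr_le0; first by rewrite invr_le0; apply: ltW; near: h; exists 1 => /=.
  by rewrite subr_le0; near: h; exact: cvg_within fmax.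
- near=> h; apply: mulr_ge0_le0; first by rewrite invr_ge0; apply: ltW; near: h; exists 1 => /=.
  by rewrite subr_le0; near: h; exact: cvg_within fmax.
Unshelve. all: by end_near. Qed.

Lemma interior_shift_near (A : set V) x v :
  interior A x -> \forall h \near (0 : R), A (h *: v + x).
Proof.
have line_cvg : (h *: v + x) @[h --> (0 : R)] --> x.
  rewrite -[X in _ --> X]add0r -(scale0r v).
  by apply: cvgD; [apply: cvgZ; [exact: cvg_id | exact: cvg_cst] | exact: cvg_cst].
exact: line_cvg.
Qed.

End LineDerivative.

Lemma dom_S_Sfin {R : realType} (S : 'rV[R]_3 -> \bar R) W :
  (forall W, S W != +oo%E) -> dom_S S W -> S W = (Sfin S W)%:E.
Proof. by move=> /(_ W); rewrite /Sfin => + [_]; case: (S W). Qed.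

Section Stationarity.
Context {R : realType} {Sl Sg Sv : 'rV[R]_3 -> \bar R}.
Hypotheses (Sl_fin : forall W, Sl W != +oo%E) (Sg_fin : forall W, Sg W != +oo%E)
  (Sv_fin : forall W, Sv W != +oo%E).

Lemma interior_max_stationary {F : 'rV[R]_3 -> 'rV[R]_3 -> 'rV[R]_3 -> Prop}
    {Wl Wg Wv dl dg dv : 'rV[R]_3} :
  interior_point Sl Sg Sv Wl Wg Wv ->
  (forall Wl' Wg' Wv', F Wl' Wg' Wv' ->
     (Sigma Sl Sg Sv Wl' Wg' Wv' <= Sigma Sl Sg Sv Wl Wg Wv)%E) ->
  (forall h : R, dom_S Sl (h *: dl + Wl) -> dom_S Sg (h *: dg + Wg) ->
     dom_S Sv (h *: dv + Wv) -> F (h *: dl + Wl) (h *: dg + Wg) (h *: dv + Wv)) ->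
  derivable (Sfin Sl) Wl dl -> derivable (Sfin Sg) Wg dg -> derivable (Sfin Sv) Wv dv ->
  'D_dl (Sfin Sl) Wl + 'D_dg (Sfin Sg) Wg + 'D_dv (Sfin Sv) Wv = 0.
Proof.
move=> [Il Ig Iv] Wmax Fshift dSl dSg dSv.
pose psi h := Sfin Sl (h *: dl + Wl) + Sfin Sg (h *: dg + Wg) + Sfin Sv (h *: dv + Wv).
have dpsi : is_derive (0 : R) 1 psi
    ('D_dl (Sfin Sl) Wl + 'D_dg (Sfin Sg) Wg + 'D_dv (Sfin Sv) Wv).
  by apply: is_deriveD; [apply: is_deriveD|]; apply: is_derive_line.
case: dpsi => psi_derivable <-; apply: derive_eq0_at_local_max => //.
near=> h; rewrite -[h *: 1]/(h * 1) mulr1 addr0 /psi !scale0r !add0r.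
have Dl : dom_S Sl (h *: dl + Wl) by near: h; exact: interior_shift_near.
have Dg : dom_S Sg (h *: dg + Wg) by near: h; exact: interior_shift_near.
have Dv : dom_S Sv (h *: dv + Wv) by near: h; exact: interior_shift_near.
have := Wmax _ _ _ (Fshift h Dl Dg Dv); rewrite /Sigma.
have [DWl DWg DWv] := And3 (interior_subset Il) (interior_subset Ig) (interior_subset Iv).
by rewrite !dom_S_Sfin // -!EFinD lee_fin.
Unshelve. all: by end_near. Qed.

End Stationarity.

Definition tangent_a {R : realType} (dl dg dv : 'rV[R]_3) : Prop :=
  [/\ [/\ Mof dl = 0, Mof dg = 0 & Mof dv = 0],
      Eof dl + Eof dg + Eof dv = 0,
      Vof dl + Vof dv = 0
    & Vof dg = Vof dv].

Definition tangent_b {R : realType} (dl dg dv : 'rV[R]_3) : Prop :=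
  [/\ Mof dg = 0 /\ Mof dl + Mof dv = 0,
      Eof dl + Eof dg + Eof dv = 0,
      Vof dl + Vof dv = 0
    & Vof dg = Vof dv].

Section Feasibility.
Context {R : realType} {Sl Sg Sv : 'rV[R]_3 -> \bar R}.

Lemma feasible_a_shift V E Ml Mg Mv Wl Wg Wv dl dg dv (h : R) :
  feasible_a Sl Sg Sv V E Ml Mg Mv Wl Wg Wv -> tangent_a dl dg dv ->
  dom_S Sl (h *: dl + Wl) -> dom_S Sg (h *: dg + Wg) -> dom_S Sv (h *: dv + Wv) ->
  feasible_a Sl Sg Sv V E Ml Mg Mv (h *: dl + Wl) (h *: dg + Wg) (h *: dv + Wv).
Proof.
rewrite /feasible_a /tangent_a /Mof /Vof /Eof !mxE.
move=> [_ [<- <- <-] -> -> VgVv] [[ml mg mv] e v vgv] Dl Dg Dv.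
by split=> //; rewrite ?mxE ?ml ?mg ?mv ?mulr0 ?add0r //; nra.
Qed.

Lemma feasible_b_shift M V E Mg Wl Wg Wv dl dg dv (h : R) :
  feasible_b Sl Sg Sv M V E Mg Wl Wg Wv -> tangent_b dl dg dv ->
  dom_S Sl (h *: dl + Wl) -> dom_S Sg (h *: dg + Wg) -> dom_S Sv (h *: dv + Wv) ->
  feasible_b Sl Sg Sv M V E Mg (h *: dl + Wl) (h *: dg + Wg) (h *: dv + Wv).
Proof.
rewrite /feasible_b /tangent_b /Mof /Vof /Eof !mxE.
move=> [_ [<- ->] -> -> VgVv] [[mg m] e v vgv] Dl Dg Dv.
by split=> //; rewrite ?mxE ?mg ?mulr0 ?add0r //; nra.
Qed.

Lemma feasible_a_sub_b {M V E : R} {Wl Wg Wv Wl' Wg' Wv' : 'rV[R]_3} :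
  feasible_b Sl Sg Sv M V E (Mof Wg) Wl Wg Wv ->
  feasible_a Sl Sg Sv V E (Mof Wl) (Mof Wg) (Mof Wv) Wl' Wg' Wv' ->
  feasible_b Sl Sg Sv M V E (Mof Wg) Wl' Wg' Wv'.
Proof. by move=> [_ [_ hM] _ _ _] [D [ml mg mv] hE hV hVg]; split; rewrite ?ml ?mg ?mv. Qed.

End Feasibility.

Lemma entropy_finite {R : realType} {S : 'rV[R]_3 -> \bar R} :
  entropy_fun S -> forall W, S W != +oo%E.
Proof. by case=> -[]. Qed.

Lemma entropy_derivable {R : realType} {S : 'rV[R]_3 -> \bar R} {W} (i : 'I_3) :
  entropy_fun S -> interior (dom_S S) W -> derivable (Sfin S) W (ev i).
Proof. by case=> _ _ C2 _ /(C2 i i) []. Qed.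

(* [inord] does not reduce, so indices are compared through their values. *)
Lemma tangent_a_exchanges {R : realType} :
  [/\ tangent_a (1 *: ev iE) ((-1) *: ev iE) (0 *: ev iE : 'rV[R]_3),
      tangent_a (0 *: ev iE) (1 *: ev iE) ((-1) *: ev iE : 'rV[R]_3)
    & tangent_a (1 *: ev iV) ((-1) *: ev iV) ((-1) *: ev iV : 'rV[R]_3)].
Proof.
by split; split; rewrite /Mof /Vof /Eof !mxE -?val_eqE /= ?inordK ?mulr0 ?mulr1 //; lra.
Qed.

Lemma tangent_b_mass_exchange {R : realType} :
  tangent_b (1 *: ev iM) (0 *: ev iM) ((-1) *: ev iM : 'rV[R]_3).
Proof. by split; rewrite /Mof /Vof /Eof !mxE -?val_eqE /= ?inordK ?mulr0 ?mulr1 //; lra. Qed.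

Section Equilibrium.
Context {R : realType} {Sl Sg Sv : 'rV[R]_3 -> \bar R}.
Hypotheses (Sl_ent : entropy_fun Sl) (Sg_ent : entropy_fun Sg) (Sv_ent : entropy_fun Sv).

Lemma interior_max_coord_stationary (F : 'rV[R]_3 -> 'rV[R]_3 -> 'rV[R]_3 -> Prop)
    Wl Wg Wv (al ag av : R) (il ig iv : 'I_3) :
  interior_point Sl Sg Sv Wl Wg Wv ->
  (forall Wl' Wg' Wv', F Wl' Wg' Wv' ->
     (Sigma Sl Sg Sv Wl' Wg' Wv' <= Sigma Sl Sg Sv Wl Wg Wv)%E) ->
  (forall h : R, dom_S Sl (h *: (al *: ev il) + Wl) -> dom_S Sg (h *: (ag *: ev ig) + Wg) ->
     dom_S Sv (h *: (av *: ev iv) + Wv) ->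
     F (h *: (al *: ev il) + Wl) (h *: (ag *: ev ig) + Wg) (h *: (av *: ev iv) + Wv)) ->
  al * 'D_(ev il) (Sfin Sl) Wl + ag * 'D_(ev ig) (Sfin Sg) Wg
    + av * 'D_(ev iv) (Sfin Sv) Wv = 0.
Proof.
move=> IW Wmax Fshift; have [Il Ig Iv] := IW.
have [dl <-] := is_derive_dirZ al (entropy_derivable il Sl_ent Il).
have [dg <-] := is_derive_dirZ ag (entropy_derivable ig Sg_ent Ig).
have [dv <-] := is_derive_dirZ av (entropy_derivable iv Sv_ent Iv).
exact: (interior_max_stationary (entropy_finite Sl_ent) (entropy_finite Sg_ent)
  (entropy_finite Sv_ent) IW Wmax Fshift dl dg dv).
Qed.

Lemma equilibrium_without_transition {V E Ml Mg Mv : R} {Wl Wg Wv : 'rV[R]_3} :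
  feasible_a Sl Sg Sv V E Ml Mg Mv Wl Wg Wv ->
  (forall Wl' Wg' Wv', feasible_a Sl Sg Sv V E Ml Mg Mv Wl' Wg' Wv' ->
     (Sigma Sl Sg Sv Wl' Wg' Wv' <= Sigma Sl Sg Sv Wl Wg Wv)%E) ->
  interior_point Sl Sg Sv Wl Wg Wv ->
  [/\ temperature Sl Wl = temperature Sg Wg,
      temperature Sg Wg = temperature Sv Wv
    & pressure Sl Wl = pressure Sg Wg + pressure Sv Wv].
Proof.
move=> FW Wmax IW; have [TElg TEgv TV] := @tangent_a_exchanges R.
have stat al ag av il ig iv :
    tangent_a (al *: ev il) (ag *: ev ig) (av *: ev iv) ->
    al * 'D_(ev il) (Sfin Sl) Wl + ag * 'D_(ev ig) (Sfin Sg) Wg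
      + av * 'D_(ev iv) (Sfin Sv) Wv = 0.
  by move=> T; apply: interior_max_coord_stationary IW Wmax _ => h; exact: feasible_a_shift.
have := stat _ _ _ _ _ _ TElg; have := stat _ _ _ _ _ _ TEgv; have := stat _ _ _ _ _ _ TV.
rewrite /pressure /temperature.
move: ('D_(ev iE) (Sfin Sl) Wl) ('D_(ev iE) (Sfin Sg) Wg) ('D_(ev iE) (Sfin Sv) Wv) => El Eg Ev.
move: ('D_(ev iV) (Sfin Sl) Wl) ('D_(ev iV) (Sfin Sg) Wg) ('D_(ev iV) (Sfin Sv) Wv) => Vl Vg Vv.
move=> volume_balance energy_gv energy_lg.
have -> : Eg = El by lra.
have -> : Ev = El by lra.
by rewrite -mulrDr; split=> //; congr (_ * _); lra.
Qed.

Lemma equilibrium_with_transition {M V E Mg : R} {Wl Wg Wv : 'rV[R]_3} :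
  feasible_b Sl Sg Sv M V E Mg Wl Wg Wv ->
  (forall Wl' Wg' Wv', feasible_b Sl Sg Sv M V E Mg Wl' Wg' Wv' ->
     (Sigma Sl Sg Sv Wl' Wg' Wv' <= Sigma Sl Sg Sv Wl Wg Wv)%E) ->
  interior_point Sl Sg Sv Wl Wg Wv ->
  [/\ temperature Sl Wl = temperature Sg Wg,
      temperature Sg Wg = temperature Sv Wv,
      pressure Sl Wl = pressure Sg Wg + pressure Sv Wv
    & chem_pot Sl Wl = chem_pot Sv Wv].
Proof.
move=> FW Wmax IW; have [D [mg _] hE hV hVg] := FW; subst Mg.
have FWa : feasible_a Sl Sg Sv V E (Mof Wl) (Mof Wg) (Mof Wv) Wl Wg Wv by [].
have [TlTg TgTv dalton] := equilibrium_without_transition FWa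
  (fun _ _ _ FW' => Wmax _ _ _ (feasible_a_sub_b FW FW')) IW.
have : 1 * 'D_(ev iM) (Sfin Sl) Wl + 0 * 'D_(ev iM) (Sfin Sg) Wg
    + (-1) * 'D_(ev iM) (Sfin Sv) Wv = 0.
  have Tmass := @tangent_b_mass_exchange R.
  by apply: interior_max_coord_stationary IW Wmax _ => h; exact: feasible_b_shift.
rewrite /chem_pot TlTg TgTv => muEq; split=> //; congr (- (_ * _)); lra.
Qed.

End Equilibrium.

Theorem proposition2p2 (R : realType) (Sl Sg Sv : 'rV[R]_3 -> \bar R) :
  entropy_fun Sl -> entropy_fun Sg -> entropy_fun Sv ->
  (* (a) without phase transition *)
  (forall (M V E Ml Mg Mv : R) (Wl Wg Wv : 'rV[R]_3),
     0 <= Ml -> 0 <= Mg -> 0 <= Mv -> M = Ml + Mg + Mv ->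
     feasible_a Sl Sg Sv V E Ml Mg Mv Wl Wg Wv ->
     (forall Wl' Wg' Wv', feasible_a Sl Sg Sv V E Ml Mg Mv Wl' Wg' Wv' ->
        (Sigma Sl Sg Sv Wl' Wg' Wv' <= Sigma Sl Sg Sv Wl Wg Wv)%E) ->
     interior_point Sl Sg Sv Wl Wg Wv ->
     [/\ temperature Sl Wl = temperature Sg Wg,
         temperature Sg Wg = temperature Sv Wv
       & pressure Sl Wl = pressure Sg Wg + pressure Sv Wv]) /\
  (* (b) with phase transition *)
  (forall (M V E Mg : R) (Wl Wg Wv : 'rV[R]_3),
     feasible_b Sl Sg Sv M V E Mg Wl Wg Wv ->
     (forall Wl' Wg' Wv', feasible_b Sl Sg Sv M V E Mg Wl' Wg' Wv' ->
        (Sigma Sl Sg Sv Wl' Wg' Wv' <= Sigma Sl Sg Sv Wl Wg Wv)%E) ->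
     interior_point Sl Sg Sv Wl Wg Wv ->
     [/\ temperature Sl Wl = temperature Sg Wg,
         temperature Sg Wg = temperature Sv Wv,
         pressure Sl Wl = pressure Sg Wg + pressure Sv Wv
       & chem_pot Sl Wl = chem_pot Sv Wv]).
Proof.
move=> Sl_ent Sg_ent Sv_ent; split.
- move=> M V E Ml Mg Mv Wl Wg Wv _ _ _ _.
  exact: equilibrium_without_transition.
- move=> M V E Mg Wl Wg Wv.
  exact: equilibrium_with_transition.
Qed.
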